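(* Let $k$ be a positive integer and let $G \in \mathcal{C}_3$ be a digraph with $n$ vertices and $m \geq 1$ arcs such that $\vec{\chi}(G) = k$. Let $I$ be an independent set of $G$. Then there exists a digraph $H \in \mathcal{C}_3$ containing $m$ pairwise vertex-disjoint copies $G_1,\dots,G_m$ of $G$ such that: (i) for all $1 \leq i \neq j \leq m$, there is no arc of $H$ between $V(G_i)$ and $V(G_j)$; (ii) for every $k$-dicolouring of $H$, there exist an index $i \in \{1,\dots,m\}$ and a colour $\alpha$ such that no vertex of the copy of $I$ in $G_i$ receives colour $\alpha$. Moreover, $H$ has $n(m+1) \leq n^4$ vertices and at most $m(m+1) + m n^2 \leq n^4$ arcs.
   Context: All digraphs are finite and simple: no loops, no multiple arcs, and for two distinct vertices $u,v$ at most one of the arcs $uv$, $vu$ is present. A $k$-dicolouring of a digraph $D$ is a partition of $V(D)$ into $k$ sets $V_1,\dots,V_k$ (some possibly empty), the colour classes, such that each induced subdigraph $D[V_i]$ is acyclic (contains no directed cycle). The dichromatic number $\vec{\chi}(D)$ is the smallest $k$ such that $D$ admits a $k$-dicolouring. $TT_3$ denotes the transitive tournament on 3 vertices; $\mathcal{C}_3$ is the class of digraphs that contain no $TT_3$ as a subdigraph and contain no induced directed cycle of length at least $4$. An independent set is a set of vertices no two of which are joined by an arc. A copy of $G$ in $H$ is an induced subdigraph of $H$ together with a fixed isomorphism from $G$ onto it; the copy of $I$ in that copy is the image of $I$ under this isomorphism. *)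

From mathcomp Require Import all_boot.
Set Implicit Arguments. Unset Strict Implicit. Unset Printing Implicit Defensive.

Definition digraph (V : finType) (e : rel V) : Prop :=
  (forall x, ~~ e x x) /\ (forall x y, ~~ (e x y && e y x)).

Definition narcs (V : finType) (e : rel V) : nat :=
  #|[set p : V * V | e p.1 p.2]|.

Definition dicycle (V : finType) (e : rel V) (s : seq V) : Prop :=
  s != [::] /\ uniq s /\ cycle e s.

Definition acyclic_on (V : finType) (e : rel V) (A : {set V}) : Prop :=
  forall s : seq V, {subset s <= A} -> ~ dicycle e s.

Definition dicolouring (V : finType) (e : rel V) (k : nat) (c : V -> 'I_k) : Prop :=
  forall a : 'I_k, acyclic_on e [set x | c x == a].

Definition dicolourable (V : finType) (e : rel V) (k : nat) : Prop :=
  exists c : V -> 'I_k, dicolouring e c.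

Definition dichromatic_eq (V : finType) (e : rel V) (k : nat) : Prop :=
  dicolourable e k /\ forall j, dicolourable e j -> k <= j.

Definition has_TT3 (V : finType) (e : rel V) : Prop :=
  exists x y z : V, [/\ e x y, e y z & e x z].

Definition has_induced_long_cycle (V : finType) (e : rel V) : Prop :=
  exists s : seq V, [/\ dicycle e s, 4 <= size s &
    forall x y, x \in s -> y \in s -> e x y -> y = next s x].

Definition in_C3 (V : finType) (e : rel V) : Prop :=
  digraph e /\ ~ has_TT3 e /\ ~ has_induced_long_cycle e.

Definition independent (V : finType) (e : rel V) (I : {set V}) : Prop :=
  forall x y, x \in I -> y \in I -> ~~ e x y.

Definition is_copy (V W : finType) (eG : rel V) (eH : rel W) (f : V -> W) : Prop :=
  injective f /\ forall x y, eH (f x) (f y) = eG x y.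

From mathcomp Require Import all_boot zify.
Set Implicit Arguments. Unset Strict Implicit. Unset Printing Implicit Defensive.

(* H consists of a central copy of G and, for each arc u_j -> v_j of it, a
   copy G_j joined by all arcs v_j -> I_j and I_j -> u_j.  As I is independent,
   no TT_3 appears, and a chordless cycle entering some G_j from the centre
   must contain the triangle v_j -> x -> u_j -> v_j, so it is not long.
   If in a k-dicolouring every I_j saw all k colours, these triangles would
   make the colouring proper on the central copy.  Merging two colour classes
   of a proper colouring of a digraph of C_3 yields a (k-1)-dicolouring: a
   shortest dicycle is chordless, hence a triangle, which a bipartite class
   cannot contain. *)

Definition chordless (T : eqType) (e : rel T) (s : seq T) : Prop :=
  forall x y, x \in s -> y \in s -> e x y -> y = next s x.

Lemma path_crossing_arc (T : eqType) (e : rel T) (P : pred T) x0 p :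
  path e x0 p -> P x0 -> has (predC P) p ->
  exists x y, [/\ x \in x0 :: p, y \in x0 :: p, P x, ~~ P y & e x y].
Proof.
elim: p x0 => [//|z p IH] x0 /= /andP[ex pp] Px0 /orP[nPz|hp].
  by exists x0, z; rewrite !inE !eqxx orbT.
case Pz: (P z); last by exists x0, z; rewrite !inE !eqxx orbT Pz.
have [x [y [hx hy Px nPy exy]]] := IH z pp Pz hp.
by exists x, y; split=> //; rewrite in_cons ?hx ?hy orbT.
Qed.

Lemma next3_neq (T : eqType) (s : seq T) x :
  uniq s -> 4 <= size s -> x \in s -> next s (next s (next s x)) != x.
Proof.
move=> us ss xs; case: (rot_to xs) => i t ht.
have us' : uniq (rot i s) by rewrite rot_uniq.
rewrite -!(next_rot i us) ht.
have : 4 <= size (rot i s) by rewrite size_rot.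
rewrite ht in us' *.
case: t {ht} us' => [|y1 [|y2 [|y3 t']]] //= us' _.
move: us'; rewrite !inE !negb_or => /andP[/and3P[n1 n2 /andP[n3 _]] /andP[/andP[m1 _] _]].
by rewrite eqxx [y1 == x]eq_sym (negbTE n1) eqxx [y2 == x]eq_sym (negbTE n2)
  [y2 == y1]eq_sym (negbTE m1) eqxx eq_sym.
Qed.

Lemma dicycle_chord_shorter (T : finType) (e : rel T) s x y :
  (forall z, ~~ e z z) -> dicycle e s -> x \in s -> y \in s -> e x y ->
  y != next s x ->
  exists s', [/\ dicycle e s', {subset s' <= s} & size s' < size s].
Proof.
move=> irr [ne [us cs]] xs ys exy nxy.
case: (rot_to ys) => i t ht.
have us' : uniq (rot i s) by rewrite rot_uniq.
have cs' : cycle e (rot i s) by rewrite rot_cycle.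
have sz : size s = size (y :: t) by rewrite -ht size_rot.
have sub : {subset y :: t <= s} by move=> z; rewrite -ht mem_rot.
rewrite -(next_rot i us) ht in nxy.
rewrite ht in us' cs'.
have xy : x != y by apply: contraNneq (irr x) => hxy; rewrite {2}hxy.
have xt : x \in t by move: (xs); rewrite -(mem_rot i) ht inE (negbTE xy).
case/splitPr: xt us' cs' nxy sz sub => t1 t2 us' cs' nxy sz sub.
exists (y :: rcons t1 x); split.
- split=> //; split.
  + move: us'; rewrite /= -cats1 !mem_cat !cat_uniq /= !inE !negb_or.
    by case/and5P=> /and3P[-> -> _] -> /andP[-> _] _ _.
  + move: cs'; rewrite /= rcons_cat cat_path rcons_path /=.
    by rewrite !rcons_path last_rcons => /and3P[-> /andP[-> _] _].
- move=> z; rewrite /= inE mem_rcons inE => hz; apply: sub.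
  by rewrite inE mem_cat inE; case/orP: hz => [->|/orP[->|->]]; rewrite ?orbT.
- case: t2 nxy sz us' {cs' sub} => [|z t2] nxy sz us'; last first.
    by rewrite sz /= size_rcons size_cat /=; lia.
  exfalso; move: nxy; rewrite next_nth.
  have xin : x \in y :: t1 ++ [:: x] by rewrite inE mem_cat inE eqxx !orbT.
  rewrite xin /= [y == x]eq_sym (negbTE xy) index_cat.
  have -> : (x \in t1) = false.
    by move: us'; rewrite /= cat_uniq /= => /and3P[_ _ /andP[/norP[/negbTE -> _] _]].
  by rewrite /= eqxx addn0 nth_default ?eqxx // size_cat /= addn1.
Qed.

Lemma dicycle_chordless_sub (T : finType) (e : rel T) s :
  (forall z, ~~ e z z) -> dicycle e s ->
  exists s', [/\ dicycle e s', chordless e s' & {subset s' <= s}].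
Proof.
move=> irr; elim: {s}(size s).+1 {-2}s (ltnSn (size s)) => [//|N IH] s hN ds.
case: (boolP (has (fun x => has (fun y => e x y && (y != next s x)) s) s)).
  case/hasP=> x xs /hasP[y ys /andP[exy nxy]].
  have [s' [ds' ss' sz']] := dicycle_chord_shorter irr ds xs ys exy nxy.
  have [s'' [ds'' cs'' ss'']] := IH s' (leq_trans sz' hN) ds'.
  by exists s''; split=> // z /ss'' /ss'.
move/hasPn=> hn; exists s; split=> // x y xs ys exy.
by move/hasPn: (hn x xs) => /(_ y ys); rewrite exy negbK => /eqP.
Qed.

Lemma cycle_crossing_arc (T : eqType) (e : rel T) (P : pred T) s :
  cycle e s -> has P s -> has (predC P) s ->
  exists x y, [/\ x \in s, y \in s, P x, ~~ P y & e x y].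
Proof.
move=> cs /hasP[a a_s Pa] /hasP[b b_s nPb].
have [i t ht] := rot_to a_s.
have mem_s z : z \in a :: rcons t a -> z \in s.
  by rewrite -(mem_rot i s) ht !in_cons mem_rcons in_cons orbA orbb.
have pt : path e a (rcons t a) by rewrite -(rot_cycle i) ht in cs.
have bt : has (predC P) (rcons t a).
  by apply/hasP; exists b; rewrite // mem_rcons; move: b_s; rewrite -(mem_rot i) ht.
have [x [y [xs ys Px nPy exy]]] := path_crossing_arc pt Pa bt.
by exists x, y; rewrite !mem_s.
Qed.

Lemma is_copy_chordless_dicycle (V W : finType) (eG : rel V) (eH : rel W) (g : V -> W) s :
  is_copy eG eH g -> dicycle eH (map g s) -> chordless eH (map g s) ->
  dicycle eG s /\ chordless eG s.
Proof.
move=> [ig hg] [ne [us cs]] ch.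
have us0 : uniq s by rewrite -(map_inj_uniq ig).
split; last first.
  move=> x y xs ys exy; apply: (ig); rewrite -(next_map ig us0).
  by apply: ch; rewrite ?mem_map ?hg.
split; first by case: s ne {us cs ch us0}.
split=> //; have -> : cycle eG s = cycle (relpre g eH) s.
  by apply: eq_cycle => x y; rewrite /= hg.
by rewrite -cycle_map.
Qed.

Lemma C3_chordless_dicycle_size3 (V : finType) (e : rel V) s :
  in_C3 e -> dicycle e s -> chordless e s -> size s = 3.
Proof.
move=> [[irr asym] [_ noLC]] ds cs.
case: (leqP 4 (size s)) => [s4|]; first by case: noLC; exists s.
case: ds => ne [_ cyc]; move: ne cyc.
case: s {cs} => [|a [|b [|c [|d t]]]] //= _.
- by rewrite (negbTE (irr a)).
- by case/and3P=> ab ba _; move: (asym a b); rewrite ab ba.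
Qed.

Lemma C3_acyclic_on_bipartite (V : finType) (e : rel V) (A : {set V}) (f : V -> bool) :
  in_C3 e -> {in A &, forall x y, e x y -> f x != f y} -> acyclic_on e A.
Proof.
move=> C3 hf s sA ds.
have [irr _] := C3.1.
have [s' [ds' cs' ss']] := dicycle_chordless_sub irr ds.
have := C3_chordless_dicycle_size3 C3 ds' cs'.
have fs : {in s' &, forall x y, e x y -> f x != f y}.
  by move=> x y /ss' /sA xA /ss' /sA yA; apply: hf.
case: ds' fs => _ [_]; case: s' {cs' ss'} => [|a [|b [|c [|d t]]]] //=.
move=> /and4P[ab bc ca _] fs _.
have := fs a b; have := fs b c; have := fs c a.
rewrite !inE !eqxx !orbT ab bc ca.
by case: (f a); case: (f b); case: (f c) => /(_ isT isT isT) + /(_ isT isT isT) + /(_ isT isT isT).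
Qed.

Lemma C3_proper_colouring_dicolourable (V : finType) (e : rel V) k (c : V -> 'I_k.+2) :
  in_C3 e -> (forall x y, e x y -> c x != c y) -> dicolourable e k.+1.
Proof.
move=> C3 hc.
pose c' x := odflt ord0 (unlift ord_max (c x)).
exists c' => a; apply: (C3_acyclic_on_bipartite (f := fun x => c x == ord_max) C3).
move=> x y; rewrite !inE /c' => /eqP cx /eqP cy exy.
apply: contra (hc x y exy) => /eqP fxy; apply/eqP.
case: (unliftP ord_max (c x)) cx => [bx ecx|ecx] /= cx;
  case: (unliftP ord_max (c y)) cy => [b2 ecy|ecy] /= cy.
- by rewrite ecx ecy cx cy.
- by move: fxy; rewrite ecx ecy eqxx eq_sym (negbTE (neq_lift _ _)).
- by move: fxy; rewrite ecx ecy eqxx eq_sym (negbTE (neq_lift _ _)).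
- by rewrite ecx ecy.
Qed.

Lemma C3_dichromatic_proper_colouring_arcless (V : finType) (e : rel V) k (c : V -> 'I_k) :
  in_C3 e -> dichromatic_eq e k -> (forall x y, e x y -> c x != c y) ->
  forall x y, ~~ e x y.
Proof.
move=> C3 [_ kmin] hc x y; apply/negP => exy.
case: k c kmin hc => [|[|k]] c kmin hc.
- by case: (c x).
- by move: (hc x y exy); rewrite (ord1 (c x)) (ord1 (c y)) eqxx.
- by have := kmin _ (C3_proper_colouring_dicolourable C3 hc); rewrite ltnn.
Qed.

Lemma narcs_double_le (V : finType) (e : rel V) :
  digraph e -> 2 * narcs e <= #|V| * #|V|.
Proof.
move=> [_ asym]; set A := [set p : V * V | e p.1 p.2].
pose sw (p : V * V) := (p.2, p.1).
have sw_inj : injective sw by move=> [? ?] [? ?] [-> ->].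
have dis : A :&: sw @: A = set0.
  apply/setP => -[x y]; rewrite !inE /=; apply/negP.
  move=> /andP[xy /imsetP[[p q] + [ex ey]]]; rewrite inE /= -ex -ey => yx.
  by move: (asym x y); rewrite xy yx.
have := max_card (A :|: sw @: A).
by rewrite cardsU dis cards0 subn0 card_imset // card_prod mul2n -addnn.
Qed.

Section Gadget.
Variables (V : finType) (e : rel V) (I : {set V}).
Let m := narcs e.

Definition arc_of (j : 'I_m) : V * V :=
  @enum_val _ (mem [set p : V * V | e p.1 p.2]) j.

Lemma arc_ofP j : e (arc_of j).1 (arc_of j).2.
Proof. by have := enum_valP j; rewrite inE. Qed.

Lemma arc_of_onto u v : e u v -> exists j, arc_of j = (u, v).
Proof.
move=> euv; have Auv : (u, v) \in [set p : V * V | e p.1 p.2] by rewrite inE.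
by exists (enum_rank_in Auv (u, v)); rewrite /arc_of enum_rankK_in.
Qed.

(* (x, None) is x in the central copy, (x, Some j) is x in the copy G_j; for
   the j-th arc u -> v of the central copy, v dominates I_j and I_j dominates u. *)
Definition gadget : rel (V * option 'I_m) := fun p q =>
  match p.2, q.2 with
  | None, None => e p.1 q.1
  | Some i, Some j => (i == j) && e p.1 q.1
  | None, Some j => (q.1 \in I) && (p.1 == (arc_of j).2)
  | Some i, None => (p.1 \in I) && (q.1 == (arc_of i).1)
  end.

Lemma gadget_part p x y : gadget (x, p) (y, p) = e x y.
Proof. by case: p => [i|]; rewrite /gadget /= ?eqxx. Qed.

Lemma gadget_copy p : is_copy e gadget (fun x => (x, p)).
Proof. by split; [move=> x y [] | exact: gadget_part]. Qed.

Lemma gadget_cross_part x y i j : i != j -> ~~ gadget (x, Some i) (y, Some j).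
Proof. by rewrite /gadget /= => /negbTE ->. Qed.

Lemma narcs_gadget : narcs gadget <= m * (m + 1) + m * (#|V| * 2).
Proof.
rewrite {1}/narcs; set A := [set p : V * V | e p.1 p.2].
pose inside (z : (V * V) * option 'I_m) := ((z.1.1, z.2), (z.1.2, z.2)).
pose attach (z : 'I_m * V * bool) :=
  if z.2 then (((arc_of z.1.1).2, None), (z.1.2, Some z.1.1))
  else ((z.1.2, Some z.1.1), ((arc_of z.1.1).1, None)).
set X := inside @: setX A [set: option 'I_m].
set Y := attach @: [set: 'I_m * V * bool].
have sub : [set p | gadget p.1 p.2] \subset X :|: Y.
  apply/subsetP => -[[a p] [b q]]; rewrite !inE /gadget /=.
  case: p q => [i|] [j|] /=.
  - case/andP=> /eqP <- ab; apply/orP; left; apply/imsetP.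
    by exists ((a, b), Some i); rewrite // !inE /= ab.
  - case/andP=> aI /eqP ->; apply/orP; right; apply/imsetP.
    by exists (i, a, false).
  - case/andP=> bI /eqP ->; apply/orP; right; apply/imsetP.
    by exists (j, b, true).
  - move=> ab; apply/orP; left; apply/imsetP.
    by exists ((a, b), None); rewrite // !inE /= ab.
apply: leq_trans (subset_leq_card sub) _.
apply: leq_trans (leq_card_setU X Y) _; apply: leq_add.
  rewrite card_imset; last by move=> [[? ?] ?] [[? ?] ?] [-> -> ->].
  by rewrite cardsX cardsT card_option card_ord addn1.
apply: leq_trans (leq_imset_card _ _) _.
by rewrite cardsT !card_prod card_bool card_ord mulnA.
Qed.

Hypothesis eC3 : in_C3 e.
Hypothesis indI : independent e I.

Let irr x : ~~ e x x.
Proof. by case: eC3 => [[]]. Qed.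

Let asym x y : e x y -> e y x -> False.
Proof. by case: eC3 => [[_ h] _] xy yx; move: (h x y); rewrite xy yx. Qed.

Lemma gadget_digraph : digraph gadget.
Proof.
split; first by case=> a p; rewrite gadget_part irr.
case=> a [i|] [b [j|]]; rewrite /gadget /=; apply/negP.
- by case/andP=> /andP[_ h1] /andP[_ h2]; apply: (asym h1 h2).
- case/andP=> /andP[_ /eqP h1] /andP[_ /eqP h2].
  by move: (arc_ofP i); rewrite -h1 -h2 (negbTE (irr b)).
- case/andP=> /andP[_ /eqP h1] /andP[_ /eqP h2].
  by move: (arc_ofP j); rewrite -h1 -h2 (negbTE (irr a)).
- by case/andP=> h1 h2; apply: (asym h1 h2).
Qed.

Lemma gadget_noTT3 : ~ has_TT3 gadget.
Proof.
have [_ [noTT _]] := eC3.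
move=> [[a p] [[b q] [[c r] []]]]; rewrite /gadget.
case: p q r => [i|] [j|] [k|] /=.
- case/andP=> /eqP <- ab /andP[/eqP <- bc] /andP[_ ac].
  by apply: noTT; exists a, b, c.
- by case/andP=> _ ab /andP[bI _] /andP[aI _]; move: (indI aI bI); rewrite ab.
- by case/andP=> aI _ /andP[cI _] /andP[_ ac]; move: (indI aI cI); rewrite ac.
- case/andP=> _ /eqP bu bc /andP[_ /eqP cu].
  by move: bc; rewrite bu cu (negbTE (irr _)).
- by case/andP=> bI _ /andP[_ bc] /andP[cI _]; move: (indI bI cI); rewrite bc.
- case/andP=> _ /eqP av /andP[_ /eqP cu] ac.
  by apply: (asym (arc_ofP j)); rewrite -av -cu.
- move=> ab /andP[_ /eqP bv] /andP[_ /eqP av].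
  by move: ab; rewrite av bv (negbTE (irr _)).
- by move=> ab bc ac; apply: noTT; exists a, b, c.
Qed.

(* Entering a copy G_j from the central copy forces v_j -> I_j -> u_j -> v_j
   onto the cycle, which is then a triangle. *)
Lemma gadget_chordless_central {s a b} :
  dicycle gadget s -> chordless gadget s -> 4 <= size s ->
  a \in s -> a.2 = None -> b \in s -> b.2 != None -> False.
Proof.
move=> [_ [us cs]] ch s4 a_s a2 b_s b2.
have [[v p] [[y q] [vs ys /= /eqP p0 q0]]] : exists x y,
    [/\ x \in s, y \in s, x.2 == None, y.2 != None & gadget x y].
  apply: (cycle_crossing_arc (P := fun w => w.2 == None) cs).
    by apply/hasP; exists a; rewrite ?a2.
  by apply/hasP; exists b.
subst p; case: q q0 ys => [j|] //= _ ys; rewrite /gadget /= => /andP[_ /eqP vj].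
have [[z p'] [[w r] [zs ws /= /eqP p'j rj]]] : exists x y,
    [/\ x \in s, y \in s, x.2 == Some j, y.2 != Some j & gadget x y].
  apply: (cycle_crossing_arc (P := fun w => w.2 == Some j) cs).
    by apply/hasP; exists (y, Some j).
  by apply/hasP; exists (v, None).
subst p'; case: r rj ws => [j'|] rj ws.
  by apply/negP/gadget_cross_part; apply: contra_neq rj => <-.
rewrite /gadget /= => /andP[zI /eqP wu].
have n1 : next s (v, None) = (z, Some j).
  by apply/esym/ch; rewrite // /gadget /= zI vj eqxx.
have n2 : next s (z, Some j) = (w, None).
  by apply/esym/ch; rewrite // /gadget /= zI wu eqxx.
have n3 : next s (w, None) = (v, None).
  by apply/esym/ch; rewrite // /gadget /= wu vj arc_ofP.
by move: (next3_neq us s4 vs); rewrite n1 n2 n3 eqxx.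
Qed.

Lemma gadget_no_induced_long_cycle : ~ has_induced_long_cycle gadget.
Proof.
have [_ [_ noLC]] := eC3.
move=> [s [ds s4 ch]].
have [x0 x0s] : exists x0, x0 \in s.
  by case: ds; case: s {s4 ch} => // x t _ _; exists x; rewrite inE eqxx.
have [hall|] := boolP (all (fun w => w.2 == x0.2) s).
  have E : s = map (fun x => (x, x0.2)) (map fst s).
    by rewrite -map_comp map_id_in // => -[x p] /(allP hall) /eqP /= ->.
  rewrite E in ds ch s4.
  have [ds' ch'] := is_copy_chordless_dicycle (gadget_copy x0.2) ds ch.
  by apply: noLC; exists (map fst s); rewrite size_map in s4.
rewrite -has_predC => nall.
have [[x p] [[y q] [xs ys /= /eqP px qx exy]]] : exists x y,
    [/\ x \in s, y \in s, x.2 == x0.2, y.2 != x0.2 & gadget x y].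
  by apply: (cycle_crossing_arc (P := fun w => w.2 == x0.2) (ds.2.2)) => //; apply/hasP; exists x0.
rewrite -{}px in qx; case: p q qx xs ys exy => [i|] [j|] //= ij xs ys.
- by apply/negP/gadget_cross_part; apply: contra_neq ij => ->.
- by move=> _; apply: (gadget_chordless_central ds ch s4 ys erefl xs).
- by move=> _; apply: (gadget_chordless_central ds ch s4 xs erefl ys).
Qed.

Lemma gadget_in_C3 : in_C3 gadget.
Proof.
split; first exact: gadget_digraph.
by split; [exact: gadget_noTT3 | exact: gadget_no_induced_long_cycle].
Qed.

(* If every I_j sees every colour, then each arc u -> v of the central copy
   closes a triangle v -> x -> u -> v with a vertex x of I_j coloured like u. *)
Lemma gadget_dicolouring_central_proper k (c : V * option 'I_m -> 'I_k) :
  dicolouring gadget c ->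
  (forall j a, exists2 x, x \in I & c (x, Some j) = a) ->
  forall u v, e u v -> c (u, None) != c (v, None).
Proof.
move=> dc full u v euv; apply/eqP => cuv.
have [j ej] := arc_of_onto euv.
have [x xI cx] := full j (c (u, None)).
apply: (dc (c (u, None)) [:: (v, None); (x, Some j); (u, None)]).
  by move=> z; rewrite !inE => /or3P[] /eqP ->; rewrite ?cx ?cuv.
have vu : v != u by apply: contraNneq (irr u) => vu; rewrite -{2}vu.
split=> //; split; first by rewrite /= !inE !xpair_eqE /= (negbTE vu) !andbF.
by rewrite /= /gadget /= xI ej /= !eqxx euv.
Qed.

Lemma gadget_dicolouring_missing_colour k (c : V * option 'I_m -> 'I_k) :
  dichromatic_eq e k -> 0 < m -> dicolouring gadget c ->
  exists i a, forall x, x \in I -> c (x, Some i) != a.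
Proof.
move=> dk m0 dc.
have [/existsP[i /existsP[a /forall_inP ha]]|none] :=
  boolP [exists i, exists a, [forall x in I, c (x, Some i) != a]].
  by exists i, a.
have full j a : exists2 x, x \in I & c (x, Some j) = a.
  move: none; rewrite negb_exists => /forallP/(_ j).
  rewrite negb_exists => /forallP/(_ a).
  by rewrite negb_forall_in => /exists_inP[x xI /negPn/eqP]; exists x.
have arcless := C3_dichromatic_proper_colouring_arcless eC3 dk
  (gadget_dicolouring_central_proper dc full).
by have := arcless (arc_of (Ordinal m0)).1 (arc_of (Ordinal m0)).2; rewrite arc_ofP.
Qed.

End Gadget.

Lemma gadget_size_bounds n m : 1 <= m -> 2 * m <= n * n ->
  [/\ n * (m + 1) <= n ^ 4, n * 2 <= n ^ 2 & m * (m + 1) + m * n ^ 2 <= n ^ 4].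
Proof.
move=> m1 mn; have n2 : 2 <= n by nia.
rewrite !expnS expn0 !muln1; split; nia.
Qed.

Theorem lemma1 (k : nat) (V : finType) (eG : rel V) (I : {set V}) :
  0 < k ->
  in_C3 eG ->
  1 <= narcs eG ->
  dichromatic_eq eG k ->
  independent eG I ->
  let n := #|V| in
  let m := narcs eG in
  exists (W : finType) (eH : rel W) (phi : 'I_m -> V -> W),
    in_C3 eH /\
    (forall i, is_copy eG eH (phi i)) /\
    (forall i j x y, i != j -> phi i x != phi j y) /\
    (forall i j x y, i != j -> ~~ eH (phi i x) (phi j y)) /\
    (forall c : W -> 'I_k, dicolouring eH c ->
       exists (i : 'I_m) (a : 'I_k), forall x, x \in I -> c (phi i x) != a) /\
    #|W| = n * (m + 1) /\ n * (m + 1) <= n ^ 4 /\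
    narcs eH <= m * (m + 1) + m * n ^ 2 /\ m * (m + 1) + m * n ^ 2 <= n ^ 4.
Proof.
move=> _ C3 m1 dk indI n m.
have [b1 b2 b3] := gadget_size_bounds m1 (narcs_double_le C3.1).
exists (V * option 'I_m)%type, (@gadget V eG I), (fun i x => (x, Some i)).
split; first exact: gadget_in_C3.
split; first by move=> i; exact: gadget_copy.
split; first by move=> i j x y ij; apply: contra_neq ij => -[].
split; first by move=> i j x y; exact: gadget_cross_part.
split; first by move=> c; exact: gadget_dicolouring_missing_colour.
split; first by rewrite card_prod card_option card_ord addn1.
do 2!split=> //.
by apply: leq_trans (@narcs_gadget V eG I) _; rewrite leq_add2l leq_mul2l b2 orbT.
Qed.
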